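(* Let $\mathcal{M}=(S,A,\delta)$ be a finite fuzzy transition system and let $\gamma=1$. Then $d^1_f(s,t)\in\Theta_{\mathcal{M}}$ for all $s,t\in S$.
   Context: A fuzzy set on a finite set $X$ is a map $\mu:X\to[0,1]$; $\mathcal{F}(X)$ is the set of fuzzy sets on $X$ and $\mathcal{P}(X)$ the power set; $\mu(U)=\max_{x\in U}\mu(x)$. A fuzzy transition system is $\mathcal{M}=(S,A,\delta)$ with $S,A$ finite and $\delta:S\times A\to\mathcal{P}(\mathcal{F}(S))$, each $\delta(s,a)$ finite. $\Theta_{\mathcal{M}}$ is the set of all membership degrees $\mu(u)$ with $u\in S$ and $\mu\in\delta(s,a)$ for some $s\in S,a\in A$, together with $0$ and $1$. $\mathcal{D}(S)$ is the set of pseudo-ultrametrics $d:S\times S\to[0,1]$ ($d(x,x)=0$, symmetric, $d(x,z)\le\max(d(x,y),d(y,z))$), ordered pointwise by $\preceq$. Lifting: for $\mu,\eta\in\mathcal{F}(S)$, $\hat d(\mu,\eta)=1$ if $\mu(S)\ne\eta(S)$, and otherwise $\hat d(\mu,\eta)$ is the minimum of $\max_{u,v}\min(d(u,v),x_{uv})$ over all $x_{uv}\ge0$ with $\max_v x_{uv}=\mu(u)$ for all $u$ and $\max_u x_{uv}=\eta(v)$ for all $v$. For $\mu$ and finite $Z\subseteq\mathcal{F}(S)$: $\hat d(\mu,Z)=\min_{\eta\in Z}\hat d(\mu,\eta)$ if $Z\neq\emptyset$, else $1$. Hausdorff distance: $H_{\hat d}(\emptyset,\emptyset)=0$, otherwise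 $H_{\hat d}(Y,Z)=\max\big(\max_{\mu\in Y}\hat d(\mu,Z),\max_{\eta\in Z}\hat d(\eta,Y)\big)$. For a discounting factor $\gamma\in(0,1]$, the functional $\Delta:\mathcal{D}(S)\to\mathcal{D}(S)$ is $\Delta(d)(s,t)=\gamma\cdot\max_{a\in A}H_{\hat d}(\delta(s,a),\delta(t,a))$; it is monotone, and $d^\gamma_f$ denotes its least fixpoint. *)

From HB Require Import structures.
From mathcomp Require Import all_boot all_order all_algebra.
From mathcomp Require Import classical_sets reals.
Set Implicit Arguments. Unset Strict Implicit. Unset Printing Implicit Defensive.
Import Order.TTheory GRing.Theory Num.Theory.
Local Open Scope ring_scope.
Local Open Scope classical_set_scope.

Section FTS.
Variables (R : realType) (S A : finType).

(* fuzzy sets on S (values in [0,1] imposed as a hypothesis where needed) *)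
Definition fuzzy := {ffun S -> R}.

Definition fheight (mu : fuzzy) : R := \big[Num.max/0]_(u : S) mu u.

Definition coupling (mu eta : fuzzy) (x : S -> S -> R) : Prop :=
  (forall u v, 0 <= x u v) /\
  (forall u, \big[Num.max/0]_(v : S) x u v = mu u) /\
  (forall v, \big[Num.max/0]_(u : S) x u v = eta v).

Definition coupling_cost (d : S -> S -> R) (x : S -> S -> R) : R :=
  \big[Num.max/0]_(p : S * S) Num.min (d p.1 p.2) (x p.1 p.2).

(* lifting \hat d; the minimum (attained) is written as the infimum *)
Definition lift (d : S -> S -> R) (mu eta : fuzzy) : R :=
  if fheight mu != fheight eta then 1
  else inf [set c | exists x, coupling mu eta x /\ c = coupling_cost d x].

Definition lift_set (d : S -> S -> R) (mu : fuzzy) (Z : seq fuzzy) : R :=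
  match Z with
  | [::] => 1
  | eta0 :: Z' => \big[Num.min/lift d mu eta0]_(eta <- Z') lift d mu eta
  end.

Definition hausdorff (d : S -> S -> R) (Y Z : seq fuzzy) : R :=
  if (Y == [::]) && (Z == [::]) then 0
  else Num.max (\big[Num.max/0]_(mu <- Y) lift_set d mu Z)
               (\big[Num.max/0]_(eta <- Z) lift_set d eta Y).

Definition is_pum (d : S -> S -> R) : Prop :=
  (forall x y, 0 <= d x y <= 1) /\
  (forall x, d x x = 0) /\
  (forall x y, d x y = d y x) /\
  (forall x y z, d x z <= Num.max (d x y) (d y z)).

Definition Delta (delta : S -> A -> seq fuzzy) (gamma : R)
  (d : S -> S -> R) : S -> S -> R :=
  fun s t => gamma * \big[Num.max/0]_(a : A) hausdorff d (delta s a) (delta t a).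

Definition is_least_fixpoint (delta : S -> A -> seq fuzzy) (gamma : R)
  (d : S -> S -> R) : Prop :=
  is_pum d /\ (forall s t, Delta delta gamma d s t = d s t) /\
  (forall d', is_pum d' -> (forall s t, Delta delta gamma d' s t = d' s t) ->
     forall s t, d s t <= d' s t).

Definition Theta (delta : S -> A -> seq fuzzy) : set R :=
  [set r | r = 0 \/ r = 1 \/
     exists s a mu u, mu \in delta s a /\ r = mu u].

End FTS.

From Pilot Require Import Defs.
From HB Require Import structures.
From mathcomp Require Import all_boot all_order all_algebra.
From mathcomp Require Import classical_sets reals.
Set Implicit Arguments.
Unset Strict Implicit.
Unset Printing Implicit Defensive.
Import Order.TTheory GRing.Theory Num.Theory.
Local Open Scope ring_scope.
Local Open Scope classical_set_scope.

(* Rounding down to the finite set Theta is monotone, hence commutes with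
   max and min, and it fixes every membership degree of the system.  Since
   Delta (for gamma = 1) and its lifting are built from max, min, inf and
   these degrees only, rounding the least fixpoint d yields again a
   fixpoint of Delta in D(S), lying below d.  Minimality forces d to be
   equal to its rounding, whose values lie in Theta. *)

Section RoundDown.
Variables (R : realDomainType) (th : seq R).

Definition round_down (x : R) : R := \big[Num.max/0]_(t <- th | t <= x) t.

Lemma round_down_ge0 x : 0 <= round_down x.
Proof. exact: bigmax_ge_id. Qed.

Lemma round_down_le x : 0 <= x -> round_down x <= x.
Proof. by move=> x_ge0; apply: bigmax_le. Qed.

Lemma round_down_homo : {homo round_down : x y / x <= y}.
Proof.
move=> x y le_xy; rewrite [round_down x]big_seq_cond.
apply: bigmax_le => [|t /andP[t_th le_tx]]; first exact: round_down_ge0.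
by apply: le_bigmax_seq => //; apply: le_trans le_xy.
Qed.
Arguments round_down_homo {x y}.

Lemma round_down_id t : t \in th -> 0 <= t -> round_down t = t.
Proof.
by move=> t_th t_ge0; apply/le_anti; rewrite round_down_le // le_bigmax_seq.
Qed.

Lemma round_down0 : round_down 0 = 0.
Proof. exact: bigmax_eq_id. Qed.

Lemma round_down_mem x : round_down x \in 0 :: th.
Proof.
rewrite /round_down big_seq_cond; elim/big_ind: _ => [|a b|t /andP[t_th _]].
- exact: mem_head.
- by rewrite maxEle; case: ifP.
- by rewrite inE t_th orbT.
Qed.

Lemma round_down_max x y :
  round_down (Num.max x y) = Num.max (round_down x) (round_down y).
Proof.
have [le_xy|/ltW le_yx] := leP x y.
  by rewrite max_r // round_down_homo.
by rewrite max_l // round_down_homo.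
Qed.

Lemma round_down_min x y :
  round_down (Num.min x y) = Num.min (round_down x) (round_down y).
Proof.
have [le_xy|/ltW le_yx] := leP x y.
  by rewrite min_l // round_down_homo.
by rewrite min_r // round_down_homo.
Qed.

(* [b] is the least element of [th] above [x], or [x + 1] if there is none. *)
Lemma round_down_locally_const x :
  exists2 b, x < b & forall y, x <= y < b -> round_down y = round_down x.
Proof.
pose b := \big[Num.min/x + 1]_(t <- th | x < t) t.
have lt_xb : x < b.
  rewrite /b; elim/big_ind: _ => [|a c xa xc|//]; first by rewrite ltrDl.
  by rewrite lt_min xa xc.
exists b => // y /andP[le_xy lt_yb]; apply/le_anti.
rewrite (round_down_homo le_xy) andbT [round_down y]big_seq_cond.
apply: bigmax_le => [|t /andP[t_th le_ty]]; first exact: round_down_ge0.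
apply: le_bigmax_seq => //; rewrite leNgt; apply/negP => lt_xt.
have le_bt : b <= t by apply: ge_bigmin_seq.
by have := lt_le_trans lt_yb (le_trans le_bt le_ty); rewrite ltxx.
Qed.

End RoundDown.

Section Couplings.
Variables (R : realType) (S : finType).

Lemma le_coupling_cost (d x x' : S -> S -> R) : (forall u v, x u v <= x' u v) ->
  coupling_cost d x <= coupling_cost d x'.
Proof. by move=> le_xx'; apply: le_bigmax2 => p _; rewrite le_min2. Qed.

Lemma bigmax_min_le_height (mu eta : fuzzy R S) u :
  (forall v, 0 <= eta v) -> 0 <= mu u -> mu u <= fheight eta ->
  \big[Num.max/0]_(v : S) Num.min (mu u) (eta v) = mu u.
Proof.
move=> eta_ge0 mu_u_ge0; rewrite /fheight.
have [v0 _ ->] := @eq_bigmax _ _ _ 0 u xpredT eta isT (fun v _ => eta_ge0 v).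
move=> le_mu_eta; apply/le_anti; rewrite bigmax_le //=; last first.
  by move=> v _; rewrite ge_min lexx.
by apply: le_trans (le_bigmax _ _ v0); rewrite le_min lexx le_mu_eta.
Qed.

Lemma coupling_exists (mu eta : fuzzy R S) :
  (forall u, 0 <= mu u) -> (forall v, 0 <= eta v) -> fheight mu = fheight eta ->
  exists x, coupling mu eta x.
Proof.
move=> mu_ge0 eta_ge0 eq_height; exists (fun u v => Num.min (mu u) (eta v)).
split; first by move=> u v; rewrite le_min mu_ge0 eta_ge0.
split=> [u|v].
  by apply: bigmax_min_le_height; rewrite // -eq_height; apply: le_bigmax.
under eq_bigr do rewrite minC.
by apply: bigmax_min_le_height; rewrite // eq_height; apply: le_bigmax.
Qed.

End Couplings.

Section Lifting.
Variables (R : realType) (S : finType) (th : seq R).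
Hypothesis th1 : 1 \in th.

Local Notation rnd := (round_down th).
Local Notation rounded f := (fun u v : S => rnd (f u v)).

Definition round_down_fixed (mu : fuzzy R S) : Prop := forall u, rnd (mu u) = mu u.

Lemma round_down_fixed_ge0 mu : round_down_fixed mu -> forall u, 0 <= mu u.
Proof. by move=> mu_fix u; rewrite -mu_fix round_down_ge0. Qed.

Lemma round_down_inf (C : set R) : C !=set0 -> has_lbound C ->
  exists2 c, C c & rnd c = rnd (inf C).
Proof.
move=> C_neq0 C_lb; have [b lt_inf_b rnd_const] := round_down_locally_const th (inf C).
have [c Cc lt_cb] := inf_lt C_neq0 lt_inf_b.
by exists c => //; rewrite rnd_const // lt_cb andbT; apply: ge_inf.
Qed.

Lemma coupling_cost_round (d x : S -> S -> R) :
  coupling_cost (rounded d) (rounded x) = rnd (coupling_cost d x).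
Proof.
rewrite /coupling_cost (big_morph rnd (round_down_max th) (round_down0 th)).
by apply: eq_bigr => p _; rewrite round_down_min.
Qed.

Lemma coupling_round (mu eta : fuzzy R S) (x : S -> S -> R) :
  round_down_fixed mu -> round_down_fixed eta ->
  coupling mu eta x -> coupling mu eta (rounded x).
Proof.
move=> mu_fix eta_fix [_ [x_mu x_eta]]; split; first by move=> u v; apply: round_down_ge0.
by split=> [u|v]; rewrite -(big_morph rnd (round_down_max th) (round_down0 th))
  ?x_mu ?x_eta.
Qed.

Lemma lift_round (d : S -> S -> R) (mu eta : fuzzy R S) :
  round_down_fixed mu -> round_down_fixed eta ->
  Defs.lift (rounded d) mu eta = rnd (Defs.lift d mu eta).
Proof.
move=> mu_fix eta_fix; rewrite /Defs.lift; case: ifP => [_|/negbFE/eqP eq_height].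
  by rewrite round_down_id.
pose costs d' := [set c | exists x, coupling mu eta x /\ c = coupling_cost d' x].
have costs_lb d' : has_lbound (costs d').
  by exists 0 => _ [x [_ ->]]; apply: bigmax_ge_id.
have costs_neq0 d' : costs d' !=set0.
  have [x x_coupling] := coupling_exists (round_down_fixed_ge0 mu_fix)
    (round_down_fixed_ge0 eta_fix) eq_height.
  by exists (coupling_cost d' x), x.
apply/le_anti/andP; split.
  have [_ [x [x_coupling ->]] rnd_cost] := round_down_inf (costs_neq0 d) (costs_lb d).
  rewrite -rnd_cost -coupling_cost_round; apply: (ge_inf (costs_lb _)).
  by exists (rounded x); split => //; apply: coupling_round.
apply: lb_le_inf (costs_neq0 _) _ => _ [x [x_coupling ->]].
have rnd_le_x u v : rnd (x u v) <= x u v.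
  by apply: round_down_le; case: x_coupling.
apply: le_trans (le_coupling_cost _ rnd_le_x).
by rewrite coupling_cost_round round_down_homo //; apply: (ge_inf (costs_lb _)); exists x.
Qed.

Lemma lift_set_round (d : S -> S -> R) (mu : fuzzy R S) (Z : seq (fuzzy R S)) :
  round_down_fixed mu -> {in Z, forall eta, round_down_fixed eta} ->
  lift_set (rounded d) mu Z = rnd (lift_set d mu Z).
Proof.
move=> mu_fix; case: Z => [|eta0 Z] Z_fix /=; first by rewrite round_down_id.
have eta0_fix := Z_fix _ (mem_head _ _).
rewrite (big_morph rnd (round_down_min th) (esym (lift_round d mu_fix eta0_fix))).
apply: eq_big_seq => eta eta_Z; apply: lift_round mu_fix (Z_fix _ _).
by rewrite inE eta_Z orbT.
Qed.

Lemma hausdorff_round (d : S -> S -> R) (Y Z : seq (fuzzy R S)) :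
  {in Y, forall mu, round_down_fixed mu} -> {in Z, forall eta, round_down_fixed eta} ->
  hausdorff (rounded d) Y Z = rnd (hausdorff d Y Z).
Proof.
move=> Y_fix Z_fix; rewrite /hausdorff; case: ifP => _; first by rewrite round_down0.
rewrite round_down_max !(big_morph rnd (round_down_max th) (round_down0 th)).
congr Num.max; apply: eq_big_seq.
- by move=> mu /Y_fix mu_fix; apply: lift_set_round.
- by move=> eta /Z_fix eta_fix; apply: lift_set_round.
Qed.

Lemma is_pum_round (d : S -> S -> R) : is_pum d -> is_pum (rounded d).
Proof.
move=> [d_bound [d_refl [d_sym d_ultra]]]; split; [|split; [|split]].
- move=> x y; have /andP[d_ge0 d_le1] := d_bound x y.
  by rewrite round_down_ge0 (le_trans (round_down_le _ d_ge0)).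
- by move=> x; rewrite d_refl round_down0.
- by move=> x y; rewrite d_sym.
- by move=> x y z; rewrite -round_down_max round_down_homo.
Qed.

End Lifting.

Section FixpointDegrees.
Variables (R : realType) (S A : finType) (delta : S -> A -> seq (fuzzy R S)).

Definition degrees : seq R := 1 ::
  [seq mu u | mu : fuzzy R S <- flatten [seq delta p.1 p.2 | p <- enum {: S * A}],
              u <- enum S].

Lemma mem_degrees s a mu u : mu \in delta s a -> mu u \in degrees.
Proof.
move=> mu_in; rewrite inE; apply/orP; right.
apply/allpairsP; exists (mu, u); split; rewrite ?mem_enum //=.
by apply/flattenP; exists (delta s a) => //; apply/mapP; exists (s, a); rewrite ?mem_enum.
Qed.

Lemma Theta_degrees x : x \in 0 :: degrees -> Theta delta x.
Proof.
rewrite !inE => /orP[/eqP->|/orP[/eqP->|/allpairsP[[mu u] [/= mu_in _ ->]]]].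
- by left.
- by right; left.
have /flattenP[_ /mapP[[s a] _ ->] mu_sa] := mu_in.
by right; right; exists s, a, mu, u.
Qed.

Lemma Delta1_round (d : S -> S -> R) :
  (forall s a mu, mu \in delta s a -> forall u, 0 <= mu u) ->
  forall s t, Delta delta 1 (fun u v => round_down degrees (d u v)) s t =
              round_down degrees (Delta delta 1 d s t).
Proof.
move=> delta_ge0 s t.
have delta_fix s' a : {in delta s' a, forall mu, round_down_fixed degrees mu}.
  by move=> mu mu_in u; apply: round_down_id (mem_degrees u mu_in) (delta_ge0 _ _ _ mu_in u).
rewrite /Delta !mul1r (big_morph _ (round_down_max _) (round_down0 _)).
apply: eq_bigr => a _.
exact: hausdorff_round (mem_head _ _) _ _ _ (delta_fix s a) (delta_fix t a).
Qed.

End FixpointDegrees.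

Theorem lemma4 (R : realType) (S A : finType) (delta : S -> A -> seq (fuzzy R S))
  (Hdelta : forall s a mu, mu \in delta s a -> forall u, 0 <= mu u <= 1)
  (d : S -> S -> R) (Hd : is_least_fixpoint delta 1 d) :
  forall s t, Theta delta (d s t).
Proof.
move=> s t; have [d_pum [d_fix d_least]] := Hd.
pose rd u v := round_down (degrees delta) (d u v).
have delta_ge0 s' a mu : mu \in delta s' a -> forall u, 0 <= mu u.
  by move=> mu_in u; have /andP[] := Hdelta s' a mu mu_in u.
have rd_fix s' t' : Delta delta 1 rd s' t' = rd s' t'.
  by rewrite Delta1_round // d_fix.
have le_d_rd := d_least rd (is_pum_round _ d_pum) rd_fix s t.
have d_ge0 : 0 <= d s t by have [/(_ s t)/andP[]] := d_pum.
have -> : d s t = rd s t by apply/le_anti; rewrite le_d_rd round_down_le.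
exact/Theta_degrees/round_down_mem.
Qed.
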